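(* For $(c,d)\in\mathbb{C}\times\mathbb{C}^*$ let $f_{c,d}(z) = 1 + \frac cz + \frac d{z^2}$, with critical points $0$ and $-2d/c$ ($=\infty$ when $c=0$), and identify $(c,d)$ with $[c:d:1]\in\mathbb{CP}^2$. For $j\ge 1$ let $\mathcal{P}_j = \{(c,d)\in\mathbb{C}\times\mathbb{C}^* : f_{c,d}^j(0) = -2d/c\}$ and $\mathcal{Q}_j = \{(c,d)\in\mathbb{C}\times\mathbb{C}^* : f_{c,d}^j(-2d/c) = 0\}$, with closures $\overline{\mathcal{P}_j}$, $\overline{\mathcal{Q}_j}$ in $\mathbb{CP}^2$. If $[c:0:1]\in\overline{\mathcal{P}_j}\cup\overline{\mathcal{Q}_j}$, then either $c=0$, or there are integers $q\ge 3$ and $p$ with $\gcd(p,q)=1$ such that $c^{-1} = -4\cos^2(\pi p/q)$. *)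

From HB Require Import structures.
From mathcomp Require Import all_boot all_order all_algebra.
From mathcomp Require Import all_classical all_reals all_analysis.
From mathcomp Require Export complex.
Import Order.TTheory GRing.Theory Num.Theory.
Import numFieldTopology.Exports numFieldNormedType.Exports.

Set Implicit Arguments.
Unset Strict Implicit.
Unset Printing Implicit Defensive.

Local Open Scope ring_scope.
Local Open Scope classical_set_scope.

(* The complex numbers R[i] (R : realType) carry their usual metric topology,
   the one induced by the modulus (same as the generic numFieldType topology). *)
HB.instance Definition _ (R : rcfType) := PseudoPointedMetric.copy R[i] (R[i])^o.

(* The Riemann sphere  C ∪ {∞}:  Some z = z,  None = ∞. *)
Definition sphere (R : rcfType) := option R[i].

Definition fcd (R : rcfType) (c d : R[i]) (z : sphere R) : sphere R :=
  match z with
  | None => Some 1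
  | Some w => if w == 0 then None else Some (1 + c / w + d / w ^+ 2)
  end.

Definition crit2 (R : rcfType) (c d : R[i]) : sphere R :=
  if c == 0 then None else Some (- (2 * d) / c).

Definition Pset (R : rcfType) (j : nat) : set (R[i] * R[i]) :=
  [set cd | cd.2 != 0 /\ iter j (fcd cd.1 cd.2) (Some 0) = crit2 cd.1 cd.2].

Definition Qset (R : rcfType) (j : nat) : set (R[i] * R[i]) :=
  [set cd | cd.2 != 0 /\ iter j (fcd cd.1 cd.2) (crit2 cd.1 cd.2) = Some 0].

Arguments Pset R j : clear implicits.
Arguments Qset R j : clear implicits.

(* Write points of the sphere as [x : y] and lift f_{c,d} to the homogeneous
   quadratic map F(x, y) = (x^2 + cxy + dy^2, x^2).  Membership in P_j and Q_j
   then becomes the vanishing of two polynomials in (c, d), so their product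
   vanishes on the closure, in particular at (c, 0).  For d = 0 the lift
   degenerates to F(x, y) = x (x + cy, x), so up to nonzero factors F^n is the
   linear recurrence u_(n+1) = u_n + c u_(n-1) with u_0 = 1, u_(-1) = 0, and
   one of the two vanishing conditions forces c = 0 or u_k = 0 for some k.
   By Binet's formula u_k = 0 means that the ratio w of the roots of
   X^2 = X + c is a (k+1)-th root of unity, and c^-1 = -(w + 2 + w^-1) =
   -4 cos^2(pi p/q).  The cases q = 1 and q = 2 are excluded because they give
   1 + 4c = 0 (then u_k = (k+1)/2^k) and c^-1 = 0. *)

From HB Require Import structures.
From mathcomp Require Import all_boot all_order all_algebra.
From mathcomp Require Import all_classical all_reals all_analysis.
From mathcomp Require Import complex.
From mathcomp Require Import ring lra.
Import Order.TTheory GRing.Theory Num.Theory.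
Import numFieldTopology.Exports numFieldNormedType.Exports.
Set Implicit Arguments.
Unset Strict Implicit.
Unset Printing Implicit Defensive.
Local Open Scope ring_scope.
Local Open Scope classical_set_scope.

Section HomogeneousLift.
Variable R : rcfType.
Implicit Types (c d : R[i]) (u v : R[i] * R[i]).

Definition hlift c d v : R[i] * R[i] :=
  (v.1 ^+ 2 + c * v.1 * v.2 + d * v.2 ^+ 2, v.1 ^+ 2).

Definition sphere_of v : sphere R := if v.2 == 0 then None else Some (v.1 / v.2).

Lemma pair_neq0 v : (v != 0) = (v.1 != 0) || (v.2 != 0).
Proof. by case: v => a b; rewrite -negb_and. Qed.

Lemma fcd_sphere_of c d v : d != 0 -> v != 0 ->
  fcd c d (sphere_of v) = sphere_of (hlift c d v) /\ hlift c d v != 0.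
Proof.
case: v => a b d0; rewrite pair_neq0 /sphere_of /hlift /= sqrf_eq0.
have [-> /=|b0 _] := eqVneq b 0.
  rewrite orbF => a0; rewrite (negPf a0) pair_neq0 /= sqrf_eq0 a0 orbT.
  by rewrite mulr0 expr0n mulr0 !addr0 divff ?sqrf_eq0.
have [-> /=|a0] := eqVneq a 0.
  by rewrite mul0r eqxx expr0n mulr0 mul0r !add0r pair_neq0 /= mulf_eq0 sqrf_eq0 (negPf d0) b0.
rewrite /= mulf_eq0 invr_eq0 (negPf a0) (negPf b0) pair_neq0 /= sqrf_eq0 a0 orbT; split => //.
by congr Some; field; rewrite a0 b0.
Qed.

Lemma iter_fcd_sphere_of c d v n : d != 0 -> v != 0 ->
  iter n (fcd c d) (sphere_of v) = sphere_of (iter n (hlift c d) v) /\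
  iter n (hlift c d) v != 0.
Proof.
move=> d0 v0; elim: n => [//|n [IHeq IHneq0]].
by rewrite !iterS IHeq; exact: fcd_sphere_of.
Qed.

Lemma sphere_of_inj u v : u != 0 -> v != 0 ->
  sphere_of u = sphere_of v -> u.1 * v.2 = u.2 * v.1.
Proof.
case: u v => a b [a' b']; rewrite !pair_neq0 /sphere_of /=.
have [-> /= a0|b0 _] := eqVneq b 0; have [-> /= a'0|b'0 _] := eqVneq b' 0 => //.
- by rewrite !mulr0 mul0r.
- by case=> ab; rewrite -(divfK b0 a) -(divfK b'0 a') ab; ring.
Qed.

Lemma fcd0 c d : fcd c d (Some 0) = sphere_of (1, 0).
Proof. by rewrite /sphere_of /= eqxx. Qed.

Lemma crit2E c d : crit2 c d = sphere_of (- (2 * d), c).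
Proof. by rewrite /crit2 /sphere_of /=; case: eqP. Qed.

Lemma fcd_crit2 c d : d != 0 -> fcd c d (crit2 c d) = sphere_of (4 * d - c ^+ 2, 4 * d).
Proof.
move=> d0; have four0 : (4 : R[i]) != 0 by rewrite pnatr_eq0.
rewrite /crit2 /sphere_of /= mulf_eq0 (negPf four0) (negPf d0) /=.
have [-> /=|c0] := eqVneq c 0; first by rewrite expr0n subr0 divff // mulf_eq0 negb_or four0.
rewrite /= mulf_eq0 invr_eq0 (negPf c0) orbF oppr_eq0 mulf_eq0 (negPf d0) pnatr_eq0 /=.
by congr Some; field; rewrite c0 d0.
Qed.

(* In homogeneous coordinates: f^(j-1)(f(0)) = -2d/c, resp. f^(j-1)(f(-2d/c)) = 0. *)
Definition Ppoly j (cd : R[i] * R[i]) : R[i] :=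
  let v := iter j.-1 (hlift cd.1 cd.2) (1, 0) in v.1 * cd.1 + v.2 * (2 * cd.2).

Definition Qpoly j (cd : R[i] * R[i]) : R[i] :=
  (iter j.-1 (hlift cd.1 cd.2) (4 * cd.2 - cd.1 ^+ 2, 4 * cd.2)).1.

Lemma Ppoly_eq0 j cd : (0 < j)%N -> Pset R j cd -> Ppoly j cd = 0.
Proof.
case: j => // j _; case: cd => c d [/= d0]; rewrite -iterS iterSr fcd0 crit2E.
have e10 : (1, 0) != 0 :> R[i] * R[i] by rewrite pair_neq0 oner_eq0.
have [-> v0] := iter_fcd_sphere_of c j d0 e10.
have crit0 : (- (2 * d), c) != 0.
  by rewrite pair_neq0 /= oppr_eq0 mulf_eq0 pnatr_eq0 (negPf d0).
by move/(sphere_of_inj v0 crit0) => /= e; rewrite /Ppoly /= e; ring.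
Qed.

Lemma Qpoly_eq0 j cd : (0 < j)%N -> Qset R j cd -> Qpoly j cd = 0.
Proof.
case: j => // j _; case: cd => c d [/= d0]; rewrite -iterS iterSr fcd_crit2 //.
have crit1 : (4 * d - c ^+ 2, 4 * d) != 0.
  by rewrite pair_neq0 /= mulf_eq0 pnatr_eq0 (negPf d0) orbT.
have [-> v0] := iter_fcd_sphere_of c j d0 crit1.
have -> : Some 0 = sphere_of (0, 1) by rewrite /sphere_of /= oner_eq0 mul0r.
have e01 : (0, 1) != 0 :> R[i] * R[i] by rewrite pair_neq0 oner_eq0 orbT.
by move/(sphere_of_inj v0 e01); rewrite /Qpoly /= mulr1 mulr0.
Qed.

End HomogeneousLift.

Section DegenerateLift.
Variable R : rcfType.
Implicit Types (c : R[i]) (v : R[i] * R[i]).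

Lemma scale_pairE (a : R[i]) v : a *: v = (a * v.1, a * v.2).
Proof. by []. Qed.

Definition lucas_step c v : R[i] * R[i] := (v.1 + c * v.2, v.1).

Lemma hlift_d0 c v : hlift c 0 v = v.1 *: lucas_step c v.
Proof. by rewrite /hlift /lucas_step scale_pairE /= mul0r addr0; congr pair; ring. Qed.

Lemma lucas_stepZ c a v : lucas_step c (a *: v) = a *: lucas_step c v.
Proof. by rewrite /lucas_step !scale_pairE /=; congr pair; ring. Qed.

Lemma iter_lucas_stepZ c a v n :
  iter n (lucas_step c) (a *: v) = a *: iter n (lucas_step c) v.
Proof. by elim: n => [//|n IH]; rewrite !iterS IH lucas_stepZ. Qed.

Lemma iter_hlift_d0 c v n :
  (exists k, (iter k (lucas_step c) v).1 = 0) \/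
  exists2 l, l != 0 & iter n (hlift c 0) v = l *: iter n (lucas_step c) v.
Proof.
elim: n => [|n [|[l l0 IH]]]; [by right; exists 1; rewrite ?oner_eq0 ?scale1r | by left|].
have [vn0|vn0] := eqVneq (iter n (lucas_step c) v).1 0; first by left; exists n.
right; exists (l ^+ 2 * (iter n (lucas_step c) v).1); first by rewrite mulf_neq0 ?sqrf_eq0.
rewrite !iterS IH hlift_d0 lucas_stepZ scalerA; congr (_ *: _).
by rewrite scale_pairE /=; ring.
Qed.

Lemma iter_hlift_d0_fst_eq0 c v n :
  (iter n (hlift c 0) v).1 = 0 -> exists k, (iter k (lucas_step c) v).1 = 0.
Proof.
have [//|[l l0 ->]] := iter_hlift_d0 c v n.
rewrite scale_pairE /= => /eqP; rewrite mulf_eq0 (negPf l0) => /eqP.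
by exists n.
Qed.

End DegenerateLift.

Section Closure.
Variable R : realType.
Local Notation C2 := (R[i] * R[i])%type.
Implicit Types f g : C2 -> R[i].

Lemma continuous_fst : continuous (fun p : C2 => p.1).
Proof. by move=> x; exact: cvg_fst. Qed.

Lemma continuous_snd : continuous (fun p : C2 => p.2).
Proof. by move=> x; exact: cvg_snd. Qed.

Lemma continuous_cst (a : R[i]) : continuous (fun _ : C2 => a).
Proof. by move=> x; exact: cvg_cst. Qed.

Lemma continuous_add f g : continuous f -> continuous g -> continuous (fun p => f p + g p).
Proof. move=> cf cg x; exact: (@continuousD _ R[i]^o _ f g x (cf x) (cg x)). Qed.

Lemma continuous_sub f g : continuous f -> continuous g -> continuous (fun p => f p - g p).
Proof. move=> cf cg x; exact: (@continuousB _ R[i]^o _ f g x (cf x) (cg x)). Qed.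

Lemma continuous_mul f g : continuous f -> continuous g -> continuous (fun p => f p * g p).
Proof. move=> cf cg x; exact: continuousM (cf x) (cg x). Qed.

Lemma continuous_pair f g : continuous f -> continuous g -> continuous (fun p => (f p, g p)).
Proof. move=> cf cg x; exact: cvg_pair (cf x) (cg x). Qed.

Lemma continuous_pair_fst (h : C2 -> C2) : continuous h -> continuous (fun p => (h p).1).
Proof. by move=> ch x; exact: (continuous_comp (ch x) (@continuous_fst (h x))). Qed.

Lemma continuous_pair_snd (h : C2 -> C2) : continuous h -> continuous (fun p => (h p).2).
Proof. by move=> ch x; exact: (continuous_comp (ch x) (@continuous_snd (h x))). Qed.

Lemma continuous_hlift (h : C2 -> C2) : continuous h ->
  continuous (fun p : C2 => hlift p.1 p.2 (h p)).
Proof.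
move=> ch.
have ch1 : continuous (fun p => (h p).1) := continuous_pair_fst ch.
have ch2 : continuous (fun p => (h p).2) := continuous_pair_snd ch.
apply: continuous_pair; last exact: (continuous_mul ch1 ch1).
apply: continuous_add; first apply: continuous_add.
- exact: (continuous_mul ch1 ch1).
- exact: (continuous_mul (continuous_mul continuous_fst ch1) ch2).
- exact: (continuous_mul continuous_snd (continuous_mul ch2 ch2)).
Qed.

Lemma continuous_iter_hlift (v : C2 -> C2) n : continuous v ->
  continuous (fun p : C2 => iter n (hlift p.1 p.2) (v p)).
Proof.
move=> cv; elim: n => [|n IH]; first exact: cv.
exact: continuous_hlift IH.
Qed.

Lemma continuous_Ppoly j : continuous (Ppoly j : C2 -> R[i]).
Proof.
have c10 : continuous (fun _ : C2 => (1, 0) : C2) by move=> x; exact: cvg_cst.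
have cv := continuous_iter_hlift (n := j.-1) c10.
have cv1 : continuous (fun p : C2 => (iter j.-1 (hlift p.1 p.2) (1, 0)).1).
  exact: continuous_pair_fst cv.
have cv2 : continuous (fun p : C2 => (iter j.-1 (hlift p.1 p.2) (1, 0)).2).
  exact: continuous_pair_snd cv.
rewrite /Ppoly /=; exact: (continuous_add (continuous_mul cv1 continuous_fst)
  (continuous_mul cv2 (continuous_mul (@continuous_cst 2) continuous_snd))).
Qed.

Lemma continuous_Qpoly j : continuous (Qpoly j : C2 -> R[i]).
Proof.
have c4d : continuous (fun p : C2 => 4 * p.2).
  exact: (continuous_mul (@continuous_cst 4) continuous_snd).
have csq : continuous (fun p : C2 => p.1 ^+ 2).
  exact: (continuous_mul continuous_fst continuous_fst).
have cv := continuous_iter_hlift (n := j.-1) (continuous_pair (continuous_sub c4d csq) c4d).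
exact: (continuous_pair_fst cv).
Qed.

Lemma closure_sub_zeros f (A : set C2) : continuous f ->
  A `<=` f @^-1` [set 0] -> closure A `<=` f @^-1` [set 0].
Proof.
move=> cf Af; rewrite closureE; apply: smallest_sub => //.
apply: (continuous_closedP _).1 => //; apply: accessible_closed_set1.
exact/hausdorff_accessible/(@norm_hausdorff R[i] R[i]^o).
Qed.

Lemma closure_PQset_d0 j c : (0 < j)%N -> closure (Pset R j `|` Qset R j) (c, 0) ->
  c = 0 \/ exists k, (iter k (lucas_step c) (1, 0)).1 = 0.
Proof.
move=> j_gt0 cl.
have : Ppoly j (c, 0) * Qpoly j (c, 0) = 0.
  apply: (closure_sub_zeros (continuous_mul (@continuous_Ppoly j) (@continuous_Qpoly j))) cl.
  by move=> cd [/(Ppoly_eq0 j_gt0)|/(Qpoly_eq0 j_gt0)] /= ->; rewrite ?mul0r ?mulr0.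
move/eqP; rewrite mulf_eq0 => /orP[|] /eqP.
  rewrite /Ppoly /= !mulr0 addr0 => /eqP; rewrite mulf_eq0 => /orP[|] /eqP.
    by move/iter_hlift_d0_fst_eq0; right.
  by left.
rewrite /Qpoly /=.
have -> : (4 * 0 - c ^+ 2, 4 * 0) = (- c ^+ 2) *: (1, 0) :> C2.
  by rewrite scale_pairE /= !mulr0 sub0r mulr1.
move/iter_hlift_d0_fst_eq0 => [k]; rewrite iter_lucas_stepZ scale_pairE /=.
move/eqP; rewrite mulf_eq0 oppr_eq0 sqrf_eq0 => /orP[|] /eqP; first by left.
by right; exists k.
Qed.

End Closure.

Section LucasSequence.
Variable R : rcfType.
Implicit Types (c al be : R[i]).

Lemma iter_lucas_step_binet c al be n :
  al ^+ 2 = al + c -> be ^+ 2 = be + c ->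
  (al - be) *: iter n (lucas_step c) (1, 0) =
  (al ^+ n.+1 - be ^+ n.+1, al ^+ n - be ^+ n).
Proof.
move=> al_root be_root; elim: n => [|n].
  by rewrite scale_pairE /= mulr1 mulr0 !expr1 !expr0 subrr.
rewrite scale_pairE => -[IH1 IH2].
have rec x : x ^+ 2 = x + c -> x ^+ n.+2 = x ^+ n.+1 + c * x ^+ n.
  by move=> x_root; rewrite !exprS mulrA -expr2 x_root; ring.
rewrite iterS scale_pairE /= rec // rec //; congr pair => //.
by rewrite mulrDr IH1 mulrCA IH2; ring.
Qed.

Lemma iter_lucas_step_disc0 c n : 1 + 4 * c = 0 ->
  2 ^+ n *: iter n (lucas_step c) (1, 0) = (n.+1%:R, n%:R *+ 2).
Proof.
move=> disc0; have c4 : 4 * c = -1 by apply/eqP; rewrite -subr_eq0 opprK addrC disc0.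
have four0 : (4 : R[i]) != 0 by rewrite pnatr_eq0.
elim: n => [|n]; first by rewrite expr0 scale1r mul0rn.
rewrite scale_pairE => -[IH1 IH2].
rewrite iterS scale_pairE /= exprS -!mulrA mulrDr IH1 mulrCA IH2; congr pair; last exact: mulr_natl.
by rewrite -[c](mulKf four0) c4 !mulrS; field.
Qed.

Lemma lucas_disc0_fst_neq0 c n : 1 + 4 * c = 0 -> (iter n (lucas_step c) (1, 0)).1 != 0.
Proof.
move=> /(iter_lucas_step_disc0 n); rewrite scale_pairE => -[+ _] /=.
by apply: contra_eq_neq => ->; rewrite mulr0 eq_sym pnatr_eq0.
Qed.

Lemma lucas_root_unity c k : c != 0 -> (iter k (lucas_step c) (1, 0)).1 = 0 ->
  exists w : R[i], w ^+ k.+1 = 1 /\ c^-1 = - (w + 2 + w^-1).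
Proof.
move=> c0 uk0; pose s := sqrtC (1 + 4 * c).
have two0 : (2 : R[i]) != 0 by rewrite pnatr_eq0.
have four0 : (4 : R[i]) != 0 by rewrite pnatr_eq0.
pose al := (1 + s) / 2; pose be := (1 - s) / 2.
have sum : al + be = 1 by rewrite /al /be; field.
have prod : al * be = - c.
  have -> : al * be = (1 - s ^+ 2) / 4 by rewrite /al /be; field.
  by rewrite sqrtCK; field.
have quad x : x * (1 - x) = - c -> x ^+ 2 = x + c.
  by move=> xc; rewrite -[c]opprK -xc; ring.
have al_root : al ^+ 2 = al + c by apply: quad; rewrite -sum addrC addKr.
have be_root : be ^+ 2 = be + c by apply: quad; rewrite -sum addrK mulrC.
clearbody al be.
have := iter_lucas_step_binet k al_root be_root; rewrite scale_pairE uk0 mulr0 => -[].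
move/eqP; rewrite eq_sym subr_eq0 => /eqP al_be _.
have be0 : be != 0 by apply: contra_neq c0 => be0; apply/eqP; rewrite -oppr_eq0 -prod be0 mulr0.
have al0 : al != 0 by apply: contra_neq c0 => al0; apply/eqP; rewrite -oppr_eq0 -prod al0 mul0r.
exists (al / be); split; first by rewrite exprMn exprVn al_be divff // expf_neq0.
rewrite invf_div -[c]opprK -prod invrN; congr (- _).
have -> : (al * be)^-1 = (al + be) ^+ 2 / (al * be) by rewrite sum expr1n mul1r.
by field; rewrite al0 be0.
Qed.

End LucasSequence.

Lemma coprime_frac (R : numFieldType) (k : int) (m : nat) : (0 < m)%N ->
  exists (p : int) (q : nat), [/\ (0 < q)%N, coprimez p q%:Z &
    k%:~R / m%:R = p%:~R / q%:R :> R].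
Proof.
move=> m_gt0; pose r : rat := k%:~R / m%:R.
exists (numq r), `|denq r|%N; rewrite absz_gt0 denq_neq0 coprimezE coprime_num_den.
split => //; rewrite natr_absz gtr0_norm ?denq_gt0 // -[RHS]/(ratr r).
by rewrite fmorph_div rmorph_int rmorph_nat.
Qed.

Section Trigonometry.
Variable R : realType.
Local Close Scope classical_set_scope.

Lemma cos_pi_mulrz (p : int) : cos (pi * p%:~R) = (-1) ^+ `|p|%N :> R.
Proof.
have cos_pi_nat (n : nat) : cos (pi *+ n) = (-1) ^+ n :> R.
  by rewrite -[pi *+ n]add0r (alternatingn (@cosDpi R)) cos0 mulr1.
case: p => n; first by rewrite mulr_natr cos_pi_nat.
by rewrite NegzE intrN mulrN cosN abszN absz_nat mulr_natr cos_pi_nat.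
Qed.

Lemma cosD_2pi_mulz (x : R) (k : int) : cos (x + pi *+ 2 *~ k) = cos x.
Proof.
case: k => n; first exact: (periodicn (@cosD2pi R)).
by rewrite NegzE mulrNz -pmulrn -[in RHS](subrK (pi *+ 2 *+ n.+1) x) (periodicn (@cosD2pi R)).
Qed.

Lemma cos_eq1 (t : R) : cos t = 1 -> exists k : int, t = pi *+ 2 *~ k.
Proof.
move=> cos_t; have two_pi_gt0 : 0 < pi *+ 2 :> R by rewrite pmulrn_rgt0 ?pi_gt0.
pose k := Num.floor (t / (pi *+ 2)); exists k.
pose r := t - pi *+ 2 *~ k.
have /andP[r_ge0 r_lt] : 0 <= r < pi *+ 2.
  have /andP[] : k%:~R <= t / (pi *+ 2) < (k + 1)%:~R.
    by rewrite -real_floor_eq ?num_real.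
  rewrite ler_pdivlMr // ltr_pdivrMr // !mulrzl mulrzDr /r; lra.
have cos_r : cos r = 1 by rewrite /r -mulrNz cosD_2pi_mulz.
suff r0 : r = 0 by apply/eqP; rewrite -subr_eq0 -/r r0.
have [r_le_pi|pi_lt_r] := lerP r pi.
  by apply: (@cos_inj R); rewrite ?in_itv /= ?r_ge0 ?r_le_pi ?lexx ?pi_ge0 ?cos_r ?cos0.
have : pi *+ 2 - r = 0.
  apply: (@cos_inj R); rewrite ?in_itv /= ?lexx ?pi_ge0 //.
    by apply/andP; split; lra.
  by rewrite cos0 addrC cosD2pi cosN.
lra.
Qed.

Lemma cos_sin_exprn (t : R) n :
  ((cos t +i* sin t) ^+ n = cos (t *+ n) +i* sin (t *+ n))%C.
Proof.
elim: n => [|n IH]; first by rewrite expr0 mulr0n cos0 sin0.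
rewrite exprS IH mulrS cosD sinD.
by apply/eqP; rewrite eq_complex /=; apply/andP; split; apply/eqP; ring.
Qed.

Lemma normc1_cos_sin (w : R[i]) : `|w| = 1 -> exists t : R, w = (cos t +i* sin t)%C.
Proof.
case: w => a b w1.
have ab1 : a ^+ 2 + b ^+ 2 = 1.
  by have /(congr1 (@complex.Re R)) := add_Re2_Im2 (a +i* b)%C; rewrite w1 expr1n.
have a_itv : a \in `[-1, 1] by rewrite in_itv /=; apply/andP; split; nra.
exists (if 0 <= b then acos a else - acos a); congr (_ +i* _)%C.
  by case: ifP; rewrite ?cosN acosK.
have sin_acosE : sin (acos a) = `|b|.
  by rewrite sin_acos -?in_itv // -ab1 addrAC subrr add0r sqrtr_sqr.
case: ifPn => b0; rewrite ?sinN sin_acosE; first by rewrite ger0_norm.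
by rewrite ltr0_norm ?opprK // ltNge.
Qed.

Lemma root_unity_cos_sqr (w : R[i]) m : (0 < m)%N -> w ^+ m = 1 ->
  exists k : int, w + 2 + w^-1 = (4 * cos (pi * k%:~R / m%:R) ^+ 2)%:C%C.
Proof.
move=> m_gt0 wm1.
have w1 : `|w| = 1.
  by apply/eqP; rewrite -(pexpr_eq1 (n := m)) ?normr_ge0 -?lt0n // -normrX wm1 normr1.
have [t wE] := normc1_cos_sin w1.
have [k tmE] : exists k : int, t *+ m = pi *+ 2 *~ k.
  by apply: cos_eq1; have /(congr1 (@complex.Re R)) := wm1; rewrite wE cos_sin_exprn.
exists k.
have tE : t = (pi * k%:~R / m%:R) *+ 2.
  have m0 : (m%:R : R) != 0 by rewrite pnatr_eq0 -lt0n.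
  by apply: (mulIf m0); rewrite mulr_natr tmE -mulrzr; field.
have wwJ : w * w^*%C = 1 by rewrite -sqr_normc w1 expr1n.
have winv : w^-1 = w^*%C.
  by rewrite -[LHS]mulr1 -wwJ mulrA mulVf ?mul1r // -normr_eq0 w1 oner_eq0.
rewrite winv addrAC addcJ wE /= tE cos_mulr2n.
by apply/eqP; rewrite eq_complex /=; apply/andP; split; apply/eqP; ring.
Qed.

Lemma cos_pi_frac_sqr (p : int) (q : nat) : (0 < q < 3)%N -> coprimez p q%:Z ->
  cos (pi * p%:~R / q%:R) ^+ 2 = (q == 1)%:R :> R.
Proof.
case: q => [|[|[|q]]] // _; first by rewrite divr1 cos_pi_mulrz -exprM mulnC exprM sqrrN !expr1n.
rewrite coprimezE coprimen2 => p_odd.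
have : cos (pi * p%:~R) = cos (pi * p%:~R / 2) ^+ 2 *+ 2 - 1 :> R.
  by rewrite -cos_mulr2n mulr2n -splitr.
rewrite cos_pi_mulrz -signr_odd p_odd expr1 => /eqP.
by rewrite eq_sym subr_eq addNr mulrn_eq0 => /eqP.
Qed.

End Trigonometry.

Theorem lemma3p4 (R : realType) (j : nat) (c : R[i]) :
  (1 <= j)%N ->
  closure (Pset R j `|` Qset R j) (c, 0) ->
  c = 0 \/
  exists (p : int) (q : nat), (3 <= q)%N /\ coprimez p q%:Z /\
    c^-1 = ((- 4 * cos (pi * p%:~R / q%:R) ^+ 2)%:C)%C.
Proof.
move=> j_gt0 /(closure_PQset_d0 j_gt0) [->|[k uk0]]; first by left.
have [->|c0] := eqVneq c 0; first by left.
right.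
have [w [wk cE]] := lucas_root_unity c0 uk0.
have [m wE] := root_unity_cos_sqr (ltn0Sn k) wk.
have [p [q [q_gt0 pq mkE]]] := coprime_frac R m (ltn0Sn k).
have {cE wE mkE} cE : c^-1 = ((- 4 * cos (pi * p%:~R / q%:R) ^+ 2)%:C)%C.
  by rewrite cE wE -!mulrA mkE mulNr rmorphN.
exists p, q; split; last by split.
rewrite ltnNge; apply/negP => q_le2.
move: cE; rewrite cos_pi_frac_sqr ?q_gt0 //; case: eqP => _.
  rewrite mulr1 rmorphN rmorph_nat => cinv.
  have disc : 1 + 4 * c = 0 by rewrite -[4]opprK -cinv mulNr mulVf // subrr.
  by move: (lucas_disc0_fst_neq0 k disc); rewrite uk0 eqxx.
by rewrite mulr0 rmorph0 => /eqP; rewrite invr_eq0 (negPf c0).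
Qed.
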